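(* For $\alpha,\epsilon\in\mathbb{C}$ with $\epsilon=0$ or $\epsilon^{-1}\notin\mathbb{Z}$, let $f(m,n)=\frac{(\alpha+n+\alpha\epsilon m)(1+\epsilon n)}{1+\epsilon(m+n)}$ for $m,n\in\mathbb{Z}$ (the structure constants of the left-symmetric algebra $V_{\alpha,\epsilon}$ on the Witt algebra with basis $\{x_n\}$, $x_mx_n=f(m,n)x_{m+n}$). Consider functions $\omega:\mathbb{Z}\times\mathbb{Z}\to\mathbb{C}$ satisfying, for all $m,n,l\in\mathbb{Z}$, $$\omega(m,n)-\omega(n,m)=\tfrac{1}{12}(n^3-n)\delta_{m+n,0},\qquad (n-m)\omega(m+n,l)=\omega(m,n+l)f(n,l)-\omega(n,m+l)f(m,l).$$ If $\alpha\neq0$ or $\epsilon=0$, no such $\omega$ exists. If $\alpha=0$, $\epsilon\neq0$ and $\epsilon^{-1}\notin\mathbb{Z}$, there is exactly one such $\omega$, namely $$\omega(m,n)=\tfrac{1}{24}\big(n^3-n-(\epsilon-\epsilon^{-1})n^2\big)\delta_{m+n,0}.$$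
   Context: These conditions on $\omega$ are exactly the conditions for the product $\theta\theta=x_m\theta=\theta x_m=0$, $x_mx_n=f(m,n)x_{m+n}+\omega(m,n)\theta$ on $V_{\alpha,\epsilon}\oplus\mathbb{C}\theta$ to be a left-symmetric algebra (i.e. $(xy)z-x(yz)=(yx)z-y(xz)$) whose commutator is the Virasoro bracket $[x_m,x_n]=(n-m)x_{m+n}+\delta_{m+n,0}\frac{n^3-n}{12}\theta$, $[\theta,x_n]=0$. *)

(* The complex numbers are R[i] = complex R for R : realType
   (every realType is a complete archimedean ordered field, i.e. (a copy of) the reals). *)
From HB Require Import structures.
From mathcomp Require Import all_boot all_order all_algebra.
From mathcomp Require Import complex reals.
Set Implicit Arguments. Unset Strict Implicit. Unset Printing Implicit Defensive.
Import Order.TTheory GRing.Theory Num.Theory.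
Local Open Scope ring_scope.

Section Defs.
Variable (C : fieldType).

Definition fLSA (alpha eps : C) (m n : int) : C :=
  (alpha + n%:~R + alpha * eps * m%:~R) * (1 + eps * n%:~R)
    / (1 + eps * (m + n)%:~R).

Definition delta0 (k : int) : C := (k == 0)%:R.

Definition omega_cond (alpha eps : C) (omega : int -> int -> C) : Prop :=
  (forall m n : int,
     omega m n - omega n m = 12%:R^-1 * ((n%:~R) ^+ 3 - n%:~R) * delta0 (m + n))
  /\
  (forall m n l : int,
     (n - m)%:~R * omega (m + n) l
     = omega m (n + l) * fLSA alpha eps n l - omega n (m + l) * fLSA alpha eps m l).

Definition omega_sol (eps : C) (m n : int) : C :=
  24%:R^-1 * ((n%:~R) ^+ 3 - n%:~R - (eps - eps^-1) * (n%:~R) ^+ 2) * delta0 (m + n).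

End Defs.

(* Taking n = 0 in the second condition gives (alpha + m + l) omega(m,l) = omega(0,m+l) f(m,l).
   On the antidiagonal l = -m, together with the first condition and f(-m,m) - f(m,-m) = 2m,
   this yields alpha (m^3 - m)/12 = 2m omega(0,0) for all m, which forces alpha = 0.
   For alpha = 0 the same identity shows that omega vanishes off the antidiagonal.  The second
   condition at (-2,1,1) and at its mirror image (2,-1,-1) gives one linear relation between
   omega(-1,1) and omega(-2,2) - omega(2,-2) = 1/2; it is contradictory for eps = 0 and determines
   omega(-1,1) otherwise.  Finally the condition at (-k,-1,k+1) propagates the values along the
   antidiagonal, so two solutions coincide, and the explicit formula is checked directly. *)

From HB Require Import structures.
From mathcomp Require Import all_boot all_order all_algebra.
From mathcomp Require Import complex reals.
From mathcomp Require Import ring zify.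
From Stdlib Require Import FunctionalExtensionality.
Set Implicit Arguments.
Unset Strict Implicit.
Unset Printing Implicit Defensive.
Import Order.TTheory GRing.Theory Num.Theory.
Local Open Scope ring_scope.
Local Open Scope complex_scope.

Section StructureConstants.
Variable C : fieldType.
Implicit Types (alpha eps : C) (omega : int -> int -> C).

Lemma delta00 : delta0 C 0 = 1.
Proof. by rewrite /delta0 eqxx. Qed.

Lemma delta0_nz k : k != 0 -> delta0 C k = 0.
Proof. by move=> /negbTE nzk; rewrite /delta0 nzk. Qed.

(* The paper's hypothesis [eps = 0 \/ eps^-1 \notin Z]: no denominator of f vanishes. *)
Definition regular_eps eps : Prop := forall k : int, 1 + eps * k%:~R != 0.

Lemma regular_epsN eps : regular_eps eps -> regular_eps (- eps).
Proof. by move=> reg k; rewrite mulNr -mulrN -rmorphN; exact: reg. Qed.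

Lemma regular_eps_inv_notin_int eps :
  eps = 0 \/ ~ (exists k : int, eps^-1 = k%:~R) -> regular_eps eps.
Proof.
case=> [-> k|eps_inv]; first by rewrite mul0r addr0 oner_eq0.
move=> k; apply/negP=> /eqP den0; apply: eps_inv; exists (- k).
have eps_k : eps * k%:~R = -1 by apply/eqP; rewrite -addr_eq0 addrC den0.
have eps_nz : eps != 0.
  by apply: contra_eq_neq eps_k => ->; rewrite mul0r eq_sym oppr_eq0 oner_eq0.
by apply: (mulfI eps_nz); rewrite mulfV // rmorphN mulrN eps_k opprK.
Qed.

Lemma fLSA0l alpha eps l :
  1 + eps * l%:~R != 0 -> fLSA alpha eps 0 l = alpha + l%:~R.
Proof. by move=> den; rewrite /fLSA !add0r mulr0z mulr0 addr0 mulfK. Qed.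

Lemma fLSAr0 alpha eps m : 1 + eps * m%:~R != 0 -> fLSA alpha eps m 0 = alpha.
Proof. by move=> den; rewrite /fLSA addr0; field. Qed.

Lemma fLSA_alpha0 eps m n :
  fLSA 0 eps m n = n%:~R * (1 + eps * n%:~R) / (1 + eps * (m + n)%:~R).
Proof. by rewrite /fLSA mul0r mul0r addr0 add0r. Qed.

Lemma fLSA_reflect alpha eps m n :
  fLSA (- alpha) (- eps) m n = - fLSA alpha eps (- m) (- n).
Proof. by rewrite /fLSA -opprD !rmorphN /= !mulNr !mulrN; ring. Qed.

Lemma fLSA_antidiag_diff alpha eps m :
  fLSA alpha eps (- m) m - fLSA alpha eps m (- m) = 2 * m%:~R.
Proof. by rewrite /fLSA addNr subrr mulr0z mulr0 addr0 !divr1 rmorphN; ring. Qed.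

Definition lsym_cond alpha eps omega : Prop :=
  forall m n l : int,
    (n - m)%:~R * omega (m + n) l
    = omega m (n + l) * fLSA alpha eps n l - omega n (m + l) * fLSA alpha eps m l.

Lemma lsym_condB alpha eps omega1 omega2 :
  lsym_cond alpha eps omega1 -> lsym_cond alpha eps omega2 ->
  lsym_cond alpha eps (fun m n => omega1 m n - omega2 m n).
Proof. by move=> lsym1 lsym2 m n l; rewrite mulrBr lsym1 lsym2; ring. Qed.

Lemma lsym_cond_reflect alpha eps omega :
  lsym_cond alpha eps omega ->
  lsym_cond (- alpha) (- eps) (fun m n => omega (- m) (- n)).
Proof.
move=> lsym m n l; rewrite !fLSA_reflect !opprD.
have := lsym (- m) (- n) (- l); rewrite [- n - - m](_ : _ = - (n - m)); last by ring.
by rewrite rmorphN mulNr => /eqP; rewrite eqr_oppLR => /eqP ->; ring.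
Qed.

Lemma lsym_shift alpha eps omega :
  regular_eps eps -> lsym_cond alpha eps omega ->
  forall m l : int,
    (alpha + (m + l)%:~R) * omega m l = omega 0 (m + l) * fLSA alpha eps m l.
Proof.
move=> reg lsym m l; have := lsym m 0 l.
rewrite addr0 !add0r fLSA0l // rmorphN /= => E.
transitivity (omega m l * (alpha + l%:~R) - (- m%:~R * omega m l)).
  by rewrite rmorphD /=; ring.
by rewrite E; ring.
Qed.

End StructureConstants.

Section CharacteristicZero.
Variable C : numFieldType.
Implicit Types (eps : C) (omega : int -> int -> C).

Lemma lsym_offantidiag eps omega :
  regular_eps eps -> lsym_cond 0 eps omega ->
  (forall k, k != 0 -> omega k 0 = omega 0 k) ->
  forall m l, m + l != 0 -> omega m l = 0.
Proof.
move=> reg lsym axis; have shift := lsym_shift reg lsym.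
have axis0 k : k != 0 -> omega 0 k = 0.
  move=> nzk; rewrite -axis //; apply/eqP.
  have := shift k 0; rewrite addr0 add0r fLSAr0 // mulr0 => /eqP.
  by rewrite mulf_eq0 intr_eq0 (negbTE nzk).
move=> m l nzml; apply/eqP.
have := shift m l; rewrite add0r axis0 // mul0r => /eqP.
by rewrite mulf_eq0 intr_eq0 (negbTE nzml).
Qed.

Lemma lsym_origin eps omega :
  regular_eps eps -> lsym_cond 0 eps omega -> omega 0 0 = 0.
Proof.
move=> reg lsym; have := lsym_shift reg lsym (-1) 1.
rewrite addNr fLSA_alpha0 addNr !mulr0z mulr1z mulr0 !addr0 divr1 mul1r mul0r => /eqP.
by rewrite eq_sym mulf_eq0 (negbTE (reg 1)) orbF => /eqP.
Qed.

Lemma lsym_antidiag12 eps omega :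
  regular_eps eps -> lsym_cond 0 eps omega ->
  3 * omega (-1) 1 * ((1 + 2 * eps) * (1 - eps))
  = omega (-2) 2 * ((1 + eps) * (1 - eps))
    - omega 1 (-1) * ((1 + eps) * (1 + 2 * eps)).
Proof.
move=> reg lsym; have := lsym (-2) 1 1.
rewrite (_ : -2 + 1 = -1) // (_ : 1 + 1 = 2) // !fLSA_alpha0 => E.
rewrite [3 * _](_ : _ = (1 - -2)%:~R * omega (-1) 1) // E.
by field; apply/andP; split; [exact: reg (-1) | exact: reg 2].
Qed.

Lemma lsym_antidiag12_diff eps omega :
  regular_eps eps -> lsym_cond 0 eps omega ->
  (omega (-2) 2 - omega 2 (-2)) * (1 - eps ^+ 2)
  = 2 * (1 - 4 * eps ^+ 2) * (omega (-1) 1 - omega 1 (-1))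
    + 6 * eps * (omega (-1) 1 + omega 1 (-1)).
Proof.
move=> reg lsym; have E1 := lsym_antidiag12 reg lsym.
(* The relation at (2,-1,-1) is the one at (-2,1,1) for the mirrored cocycle. *)
have := lsym_cond_reflect lsym; rewrite oppr0 => /(lsym_antidiag12 (regular_epsN reg)) /=.
rewrite !opprK => E2.
move/eqP: E1; rewrite eq_sym subr_eq => /eqP E1.
move/eqP: E2; rewrite eq_sym subr_eq => /eqP E2.
rewrite (_ : _ * (1 - eps ^+ 2) = omega (-2) 2 * ((1 + eps) * (1 - eps))
                                 - omega 2 (-2) * ((1 - eps) * (1 + eps))); last by ring.
by rewrite E1 E2; ring.
Qed.

Lemma lsym_sym_antidiag12 eps omega :
  eps != 0 -> regular_eps eps -> lsym_cond 0 eps omega ->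
  (forall m n, omega m n = omega n m) ->
  omega (-1) 1 = 0 /\ omega (-2) 2 = 0.
Proof.
move=> eps_nz reg lsym sym.
have a0 : omega (-1) 1 = 0.
  have := lsym_antidiag12_diff reg lsym.
  rewrite (sym 2 (-2)) (sym 1 (-1)) !subrr mul0r mulr0 add0r => /esym/eqP.
  by rewrite !mulf_eq0 (negbTE eps_nz) pnatr_eq0 -mulr2n mulrn_eq0 /= => /eqP.
split=> //; have := lsym_antidiag12 reg lsym.
rewrite (sym 1 (-1)) a0 mulr0 !mul0r subr0 => /esym/eqP.
have := reg 1; have := reg (-1); rewrite mulr1z mulrN1z mulr1 mulrN1 => nzm1 nz1.
by rewrite !mulf_eq0 (negbTE nzm1) (negbTE nz1) !orbF => /eqP.
Qed.

Lemma lsym_sym_eq0 eps omega :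
  eps != 0 -> regular_eps eps -> lsym_cond 0 eps omega ->
  (forall m n, omega m n = omega n m) -> forall m n, omega m n = 0.
Proof.
move=> eps_nz reg lsym sym.
have [a0 c0] := lsym_sym_antidiag12 eps_nz reg lsym sym.
have diag n : omega (- n.+1%:Z) n.+1 = 0 /\ omega (- n.+2%:Z) n.+2 = 0.
  elim: n => [//|n [_ IH]]; split=> //.
  have := lsym (- n.+2%:Z) (-1) n.+3.
  have -> : -1 - - n.+2%:Z = n.+1 by lia.
  have -> : - n.+2%:Z + -1 = - n.+3%:Z by lia.
  have -> : -1 + n.+3%:Z = n.+2 by lia.
  have -> : - n.+2%:Z + n.+3%:Z = 1 by lia.
  by rewrite IH a0 !mul0r subrr => /eqP; rewrite mulf_eq0 intr_eq0 => /orP[|/eqP].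
move=> m l; have [ml0|ml_nz] := eqVneq (m + l) 0; last first.
  exact: lsym_offantidiag reg lsym (fun k _ => sym k 0) m l ml_nz.
have -> : m = - l by lia.
case: l {ml0} => [[|n]|n]; first exact: lsym_origin reg lsym.
  exact: (diag n).1.
by rewrite NegzE opprK sym; exact: (diag n).1.
Qed.

Lemma omega_sol_cond eps :
  eps != 0 -> regular_eps eps -> omega_cond 0 eps (omega_sol eps).
Proof.
move=> eps_nz reg; split=> [m n | m n l].
  rewrite /omega_sol (addrC n m); have [mn0|mn_nz] := eqVneq (m + n) 0.
    have -> : m = - n by lia.
    by rewrite addNr delta00 rmorphN; field.
  by rewrite delta0_nz // !mulr0 subrr.
rewrite /omega_sol (addrCA n m l) !addrA.
have [mnl0|mnl_nz] := eqVneq (m + n + l) 0; last first.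
  by rewrite delta0_nz // !mulr0 !mul0r subrr.
rewrite mnl0 delta00 /fLSA.
have -> : l = - (m + n) by lia.
have -> : n + - (m + n) = - m by lia.
have -> : m + - (m + n) = - n by lia.
have := reg (- m); have := reg (- n).
rewrite !rmorphN ?rmorphD /= => nzn nzm.
by field; rewrite nzm nzn eps_nz.
Qed.

Lemma omega_cond_uniq eps omega1 omega2 :
  eps != 0 -> regular_eps eps ->
  omega_cond 0 eps omega1 -> omega_cond 0 eps omega2 -> omega1 = omega2.
Proof.
move=> eps_nz reg [skew1 lsym1] [skew2 lsym2].
apply: functional_extensionality => m; apply: functional_extensionality => n.
apply/eqP; rewrite -subr_eq0; apply/eqP.
apply: (lsym_sym_eq0 eps_nz reg (lsym_condB lsym1 lsym2)) => {}m {}n.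
apply/eqP; rewrite -subr_eq0; apply/eqP.
transitivity ((omega1 m n - omega1 n m) - (omega2 m n - omega2 n m)); first by ring.
by rewrite skew1 skew2 subrr.
Qed.

Lemma omega_cond_00 omega : ~ omega_cond 0 0 omega.
Proof.
case=> skew lsym.
have := lsym_antidiag12_diff (regular_eps_inv_notin_int (or_introl erefl)) lsym.
have := skew (-1) 1; have := skew (-2) 2.
rewrite !addNr !delta00 => -> -> /eqP; rewrite -subr_eq0 => /eqP E.
have : (1 : C) = 2 * 0 by rewrite -E; field.
by rewrite mulr0 => /eqP; rewrite oner_eq0.
Qed.

Lemma omega_cond_alpha_eq0 alpha eps omega :
  regular_eps eps -> omega_cond alpha eps omega -> alpha = 0.
Proof.
move=> reg [skew lsym]; have shift := lsym_shift reg lsym.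
have key m : alpha * (12^-1 * (m%:~R ^+ 3 - m%:~R)) = 2 * m%:~R * omega 0 0.
  have := skew (- m) m; rewrite addNr delta00 mulr1 => <-.
  have := shift (- m) m; have := shift m (- m).
  rewrite subrr addNr mulr0z addr0 => E1 E2.
  by rewrite mulrBr E2 E1 -mulrBr fLSA_antidiag_diff mulrC.
move: (key 3) (key 2) => /eqP; rewrite -subr_eq0 => /eqP E3 /eqP; rewrite -subr_eq0 => /eqP E2.
have : alpha * 5 = 4 * 0 - 6 * 0 by rewrite -{1}E3 -E2; field.
by rewrite !mulr0 subrr => /eqP; rewrite mulf_eq0 pnatr_eq0 orbF => /eqP.
Qed.

End CharacteristicZero.

Theorem theorem4p1 (R : realType) (alpha eps : R[i])
  (heps : eps = 0 \/ ~ (exists k : int, eps^-1 = k%:~R)) :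
  ((alpha != 0 \/ eps = 0) -> ~ (exists omega : int -> int -> R[i], omega_cond alpha eps omega))
  /\
  ((alpha = 0 /\ eps != 0 /\ ~ (exists k : int, eps^-1 = k%:~R)) ->
     omega_cond alpha eps (omega_sol eps) /\
     (forall omega : int -> int -> R[i], omega_cond alpha eps omega -> omega = omega_sol eps)).
Proof.
have reg := regular_eps_inv_notin_int heps.
split.
  move=> alpha_or_eps [omega cond]; have alpha0 := omega_cond_alpha_eq0 reg cond.
  case: alpha_or_eps => [|eps0]; first by rewrite alpha0 eqxx.
  by move: cond; rewrite alpha0 eps0; apply: omega_cond_00.
case=> -> [eps_nz _]; split; first exact: omega_sol_cond.
by move=> omega cond; apply: omega_cond_uniq cond (omega_sol_cond _ _).
Qed.
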